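(* Let $m\ge 2$, $k=2$ (the Bradley--Terry paired comparison model) and $\pi\in\mathbb{R}^m_{>0}$. A Bradley--Terry design $\xi^*=(w^*_{uv})_{u<v}$ is locally $D$-optimal if and only if (i) $w^*_{uv}\ge0$ for all $1\le u<v\le m$, (ii) $\Gamma_{uv}(\xi^* )\le\overline{\Gamma}_{uv}$ for all $u< v$, and (iii) $(\Gamma_{uv}(\xi^* )-\overline{\Gamma}_{uv})\,w^*_{uv}=0$ for all $u<v$, where $\overline{\Gamma}_{uv}=(m-1)/\lambda_{uv}$.
   Context: Bradley--Terry model: alternatives $[m]$ with parameters $\pi_i>0$; choice sets are all pairs $\{u,v\}$; in pair $\{u,v\}$, $u$ is chosen with probability $\pi_u/(\pi_u+\pi_v)$. A design is $\xi=(w_{uv})_{u<v}$ with $w_{uv}\ge0$ and $\sum w_{uv}=1$. Let $\lambda_{uv}=\pi_u\pi_v/(\pi_u+\pi_v)^2$. The information matrix $M(\xi)$ is the $m\times m$ Laplacian with $M_{uv}=-\lambda_{uv}w_{uv}$ for $u\neq v$ and zero row sums; $M^{(m)}(\xi)$ deletes the $m$-th row and column; $\xi^*$ is locally $D$-optimal if it maximizes $\log\det M^{(m)}(\xi)$ over all designs. $\Gamma(\xi)$ is the Farris transform of $\Sigma=M^{(m)}(\xi)^{-1}$: $\Gamma_{uv}=\Sigma_{uu}+\Sigma_{vv}-2\Sigma_{uv}$ for $u,v<m$, $\Gamma_{um}=\Gamma_{mu}=\Sigma_{uu}$, $\Gamma_{mm}=0$. *)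

From HB Require Import structures.
From mathcomp Require Import all_boot all_order all_algebra.
From mathcomp Require Import all_classical all_reals all_analysis.
Set Implicit Arguments. Unset Strict Implicit. Unset Printing Implicit Defensive.
Import Order.TTheory GRing.Theory Num.Theory.
Local Open Scope ring_scope.

(* Alternatives are 'I_n.+1 (so m = n.+1); the m-th alternative is ord_max.
   A design is a function w : 'I_n.+1 -> 'I_n.+1 -> R of which only the
   entries w u v with u < v are used (w u v = w_{uv}). *)

Section BT.
Variables (R : realType) (n : nat).
Implicit Types (pi : 'I_n.+1 -> R) (w : 'I_n.+1 -> 'I_n.+1 -> R).

Definition wpair w (u v : 'I_n.+1) : R := if (u < v)%N then w u v else w v u.

Definition is_design w : Prop :=
  (forall u v : 'I_n.+1, (u < v)%N -> 0 <= w u v) /\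
  \sum_(u : 'I_n.+1) \sum_(v : 'I_n.+1 | (u < v)%N) w u v = 1.

Definition lambdaBT pi (u v : 'I_n.+1) : R := pi u * pi v / (pi u + pi v) ^+ 2.

Definition infoM pi w : 'M[R]_n.+1 :=
  \matrix_(u, v) if u == v then \sum_(t : 'I_n.+1 | t != u) lambdaBT pi u t * wpair w u t
                 else - (lambdaBT pi u v * wpair w u v).

Definition infoMm pi w : 'M[R]_n := row' ord_max (col' ord_max (infoM pi w)).

Definition logdetM pi w : \bar R :=
  if 0 < \det (infoMm pi w) then (ln (\det (infoMm pi w)))%:E else -oo%E.

Definition locally_D_optimal pi w : Prop :=
  is_design w /\ forall w', is_design w' -> (logdetM pi w' <= logdetM pi w)%E.

(* Farris transform of Sigma = M^(m)^{-1} *)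
Definition GammaBT pi w (u v : 'I_n.+1) : R :=
  let S := invmx (infoMm pi w) in
  match unlift ord_max u, unlift ord_max v with
  | Some i, Some j => S i i + S j j - 2 * S i j
  | Some i, None => S i i
  | None, Some j => S j j
  | None, None => 0
  end.

Definition GammaBar pi (u v : 'I_n.+1) : R := n%:R / lambdaBT pi u v.

End BT.

(* Write M for M^(m)(xi), S for its inverse and a_uv for the difference of the
   reduced indicator vectors of u and v.  Then M(xi) is the sum over u < v of
   w_uv lambda_uv a_uv a_uv^T and Gamma_uv(xi) = a_uv^T S a_uv, so
   tr (S M(xi')) = sum_{u<v} w'_uv lambda_uv Gamma_uv(xi) for every design xi'.
   Sufficiency: if lambda_uv Gamma_uv <= m - 1 for all pairs then
   tr (S M(xi')) <= m - 1, and AM-GM for the positive definite matrix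
   L^-1 M(xi') L^-T, with L a Cholesky factor of M, gives det M(xi') <= det M.
   Necessity: moving the weight s / (1 + s) onto a pair uv multiplies det M by
   (1 + s lambda_uv Gamma_uv) / (1 + s)^(m-1) (matrix determinant lemma), which
   exceeds 1 for small s > 0 as soon as lambda_uv Gamma_uv > m - 1; finally
   sum_{u<v} w_uv lambda_uv Gamma_uv = tr (S M) = m - 1 = sum_{u<v} w_uv (m - 1)
   is a sum of nonnegative terms w_uv (m - 1 - lambda_uv Gamma_uv), which must
   all vanish. *)

From HB Require Import structures.
From mathcomp Require Import all_boot all_order all_algebra.
From mathcomp Require Import all_classical all_reals all_analysis.
From mathcomp Require Import ring lra.
Set Implicit Arguments. Unset Strict Implicit. Unset Printing Implicit Defensive.
Import Order.TTheory GRing.Theory Num.Theory.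
Local Open Scope ring_scope.

Section BilinearForm.
Variables (R : comNzRingType) (k : nat).
Implicit Types (A E : 'M[R]_k) (x y : 'cV[R]_k).

Definition bilform A x y : R := (x^T *m A *m y) 0 0.

Lemma bilformC A x y : A^T = A -> bilform A x y = bilform A y x.
Proof.
move=> sA; rewrite /bilform -[in LHS](trmxK (x^T *m A *m y)) mxE.
by rewrite !trmx_mul trmxK sA mulmxA.
Qed.

Lemma bilformDl A x1 x2 y : bilform A (x1 + x2) y = bilform A x1 y + bilform A x2 y.
Proof. by rewrite /bilform linearD /= !mulmxDl mxE. Qed.

Lemma bilformDr A x y1 y2 : bilform A x (y1 + y2) = bilform A x y1 + bilform A x y2.
Proof. by rewrite /bilform !mulmxDr mxE. Qed.

Lemma bilformBl A x1 x2 y : bilform A (x1 - x2) y = bilform A x1 y - bilform A x2 y.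
Proof. by rewrite /bilform linearB /= !mulmxBl !mxE. Qed.

Lemma bilformBr A x y1 y2 : bilform A x (y1 - y2) = bilform A x y1 - bilform A x y2.
Proof. by rewrite /bilform !mulmxBr !mxE. Qed.

Lemma bilformZl A a x y : bilform A (a *: x) y = a * bilform A x y.
Proof. by rewrite /bilform linearZ /= -!scalemxAl mxE. Qed.

Lemma bilformZr A a x y : bilform A x (a *: y) = a * bilform A x y.
Proof. by rewrite /bilform -!scalemxAr mxE. Qed.

Lemma bilform0l A y : bilform A 0 y = 0.
Proof. by rewrite /bilform trmx0 !mul0mx mxE. Qed.

Lemma bilform0r A x : bilform A x 0 = 0.
Proof. by rewrite /bilform mulmx0 mxE. Qed.

Lemma bilformZ a A x y : bilform (a *: A) x y = a * bilform A x y.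
Proof. by rewrite /bilform -scalemxAr -scalemxAl mxE. Qed.

Lemma bilform_sum (I : finType) (P : pred I) (F : I -> 'M[R]_k) x y :
  bilform (\sum_(i | P i) F i) x y = \sum_(i | P i) bilform (F i) x y.
Proof. by rewrite /bilform mulmx_sumr mulmx_suml summxE. Qed.

Lemma bilform_delta A i j : bilform A (delta_mx i 0) (delta_mx j 0) = A i j.
Proof. by rewrite /bilform trmx_delta -rowE -colE !mxE. Qed.

Lemma bilform_mulmx A E x y : bilform (E^T *m A *m E) x y = bilform A (E *m x) (E *m y).
Proof. by rewrite /bilform trmx_mul !mulmxA. Qed.

Lemma bilform1 x : bilform 1%:M x x = \sum_i x i 0 ^+ 2.
Proof. by rewrite /bilform mulmx1 mxE; apply: eq_bigr => i _; rewrite mxE expr2. Qed.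

Lemma bilform_outer a x : bilform (a *m a^T) x x = bilform 1%:M a x ^+ 2.
Proof.
rewrite /bilform mulmx1 !mulmxA -mulmxA -[a^T *m x]trmxK trmx_mul trmxK.
by rewrite [in LHS]mxE big_ord1 [_^T 0 0]mxE expr2.
Qed.

End BilinearForm.

Section PositiveDefinite.
Variables (R : realFieldType) (k : nat).
Implicit Types (A E : 'M[R]_k) (x : 'cV[R]_k).

Definition psdmx A := forall x, 0 <= bilform A x x.
Definition posdefmx A := forall x, x != 0 -> 0 < bilform A x x.

(* Writing q z for bilform A z z: if q x = 0 then q (x + t y) = 2 t (bilform A y x) + t^2 q y
   is nonnegative for every t, which forces bilform A y x = 0; take y = A x. *)
Lemma psdmx_isotropic A x :
  A^T = A -> psdmx A -> bilform A x x = 0 -> A *m x = 0.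
Proof.
move=> sA pA qx0.
have bx0 y : bilform A y x = 0.
  set b := bilform A y x; set q := bilform A y y.
  have q0 : 0 <= q by apply: pA.
  have := pA (x + (- b / (q + 1)) *: y).
  rewrite bilformDl !bilformDr !bilformZl !bilformZr (bilformC x y sA) qx0 -/b -/q.
  set t := - b / (q + 1); have ht : t * (q + 1) = - b by rewrite divfK // gt_eqF ?ltr_wpDl.
  move=> h; have t0 : t = 0 by nra.
  by rewrite -[b]opprK -ht t0 mul0r oppr0.
have : bilform 1%:M (A *m x) (A *m x) = 0.
  by rewrite -(bx0 (A *m x)) /bilform mulmx1 mulmxA.
rewrite bilform1 => /psumr_eq0P sq0; apply/matrixP => i j; rewrite ord1 [RHS]mxE.
by apply/eqP; rewrite -sqrf_eq0 sq0 // => l _; exact: sqr_ge0.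
Qed.

Lemma psdmx_unit_posdef A :
  A^T = A -> psdmx A -> A \in unitmx -> posdefmx A.
Proof.
move=> sA pA uA x x0; rewrite lt_def pA andbT.
apply: contraNneq x0 => /(psdmx_isotropic sA pA) Ax0.
by rewrite -(mulKmx uA x) Ax0 mulmx0.
Qed.

Lemma posdefmx_congr A E : E \in unitmx -> posdefmx A -> posdefmx (E^T *m A *m E).
Proof.
move=> uE pA x x0; rewrite bilform_mulmx; apply: pA.
by apply: contraNneq x0 => Ex0; rewrite -(mulKmx uE x) Ex0 mulmx0.
Qed.

Lemma posdefmx_tr_ge0 A : posdefmx A -> 0 <= \tr A.
Proof.
move=> pA; apply: sumr_ge0 => i _; rewrite -bilform_delta; apply/ltW/pA.
apply/negP => /eqP/matrixP/(_ i 0); rewrite !mxE !eqxx /=.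
by move/eqP; rewrite oner_eq0.
Qed.

End PositiveDefinite.

Section SchurComplement.
Variables (R : fieldType) (k : nat) (A : 'M[R]_(1 + k)).

Definition schur_pivot := ulsubmx A 0 0.
Definition schur_compl :=
  drsubmx A - schur_pivot^-1 *: (dlsubmx A *m (dlsubmx A)^T).
Definition schur_elim : 'M[R]_(1 + k) :=
  block_mx 1%:M (schur_pivot^-1 *: (dlsubmx A)^T) 0 1%:M.
Definition schur_diag : 'M[R]_(1 + k) := block_mx schur_pivot%:M 0 0 schur_compl.

Hypothesis symA : A^T = A.

Lemma schur_factor : schur_pivot != 0 ->
  A = schur_elim^T *m schur_diag *m schur_elim.
Proof.
move=> a0; rewrite /schur_elim /schur_diag tr_block_mx !mulmx_block -{1}[A]submxK.
have -> : ulsubmx A = schur_pivot%:M by rewrite [LHS]mx11_scalar.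
have -> : ursubmx A = (dlsubmx A)^T by rewrite trmx_dlsub symA.
have trE : (schur_pivot^-1 *: (dlsubmx A)^T)^T = schur_pivot^-1 *: dlsubmx A.
  by rewrite linearZ /= trmxK.
rewrite !trmx1 !trmx0 trE.
rewrite !(mul1mx, mulmx1, mul0mx, mulmx0, add0r, addr0).
rewrite mul_scalar_mx mul_mx_scalar !scalerA mulfV // !scale1r.
by congr block_mx; rewrite /schur_compl -scalemxAr addrC subrK.
Qed.

Lemma schur_elim_unit : schur_elim \in unitmx.
Proof. by rewrite unitmxE /schur_elim det_ublock !det1 mulr1 unitr1. Qed.

Lemma det_schur : schur_pivot != 0 -> \det A = schur_pivot * \det schur_compl.
Proof.
move=> a0; rewrite {1}(schur_factor a0) !det_mulmx det_tr /schur_elim det_ublock.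
by rewrite !det1 /schur_diag det_ublock det_scalar1 !mul1r mulr1.
Qed.

Lemma schur_compl_sym : schur_compl^T = schur_compl.
Proof.
by rewrite /schur_compl linearB /= linearZ /= trmx_mul trmxK trmx_drsub symA.
Qed.

End SchurComplement.

Section SchurComplementPosdef.
Variables (R : realFieldType) (k : nat) (A : 'M[R]_(1 + k)).
Hypothesis symA : A^T = A.

Lemma schur_pivot_gt0 : posdefmx A -> 0 < schur_pivot A.
Proof.
move=> pA; have -> : schur_pivot A = bilform A (col_mx 1%:M 0) (col_mx 1%:M 0).
  rewrite /bilform tr_col_mx -{2}[A]submxK mul_row_block mul_row_col trmx1 trmx0.
  by rewrite !mul1mx !mul0mx !mulmx0 !addr0 mulmx1.
apply: pA; rewrite col_mx_eq0 negb_and; apply/orP; left.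
by apply/negP => /eqP/matrixP/(_ 0 0); rewrite !mxE => /eqP; rewrite oner_eq0.
Qed.

Lemma schur_compl_posdef : posdefmx A -> posdefmx (schur_compl A).
Proof.
move=> pA y y0; have a0 : schur_pivot A != 0 by rewrite gt_eqF ?schur_pivot_gt0.
have ex0 : invmx (schur_elim A) *m col_mx 0 y != 0.
  apply: contraNneq y0 => /(congr1 (mulmx (schur_elim A))).
  by rewrite mulKVmx ?schur_elim_unit // mulmx0 => /eqP; rewrite col_mx_eq0 => /andP[].
have := pA _ ex0; rewrite {1}(schur_factor symA a0) bilform_mulmx mulKVmx ?schur_elim_unit //.
rewrite /bilform tr_col_mx /schur_diag mul_row_block mul_row_col.
by rewrite !mulmx0 !add0r.
Qed.

Lemma tr_schur_compl_le : 0 < schur_pivot A -> \tr (schur_compl A) <= \tr A - schur_pivot A.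
Proof.
move=> a0; rewrite -{2}[A]submxK mxtrace_block trace_mx11 addrC addKr.
rewrite /schur_compl linearB /= mxtraceZ mxtrace_mulC trace_mx11 lerBlDr lerDl.
apply: mulr_ge0; first by rewrite invr_ge0 ltW.
by rewrite mxE; apply: sumr_ge0 => i _; rewrite mxE -expr2 sqr_ge0.
Qed.

End SchurComplementPosdef.

Lemma cholesky (R : rcfType) k (A : 'M[R]_k) : A^T = A -> posdefmx A ->
  exists2 L : 'M[R]_k, L \in unitmx & A = L *m L^T.
Proof.
elim: k A => [|k IH] A sA pA.
  by exists 1%:M; [rewrite unitmx1 | apply/matrixP => [[]]].
have a0 := schur_pivot_gt0 pA.
have [L' uL' hS] := IH _ (schur_compl_sym sA) (schur_compl_posdef sA pA).
pose G : 'M[R]_(1 + k) := block_mx (Num.sqrt (schur_pivot A))%:M 0 0 L'.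
have hD : schur_diag A = G *m G^T.
  rewrite /G tr_block_mx mulmx_block !trmx0 tr_scalar_mx.
  by rewrite !(mulmx0, mul0mx, addr0, add0r) -scalar_mxM -expr2 sqr_sqrtr ?ltW // -hS.
exists ((schur_elim A)^T *m G).
  rewrite unitmx_mul unitmx_tr schur_elim_unit unitmxE /G (@det_ublock _ 1 k).
  by rewrite det_scalar1 unitrM unitfE gt_eqF ?sqrtr_gt0 // -unitmxE.
by rewrite {1}(schur_factor sA (lt0r_neq0 a0)) hD trmx_mul trmxK !mulmxA.
Qed.

Lemma posdefmx_det_gt0 (R : rcfType) k (A : 'M[R]_k) :
  A^T = A -> posdefmx A -> 0 < \det A.
Proof.
move=> sA pA; have [L uL ->] := cholesky sA pA.
by rewrite det_mulmx det_tr -expr2 exprn_even_gt0 //= -unitfE -unitmxE.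
Qed.

Lemma mul_exp_le_AGM (R : realFieldType) (a s : R) k : 0 <= a -> 0 <= s ->
  a * (s / k%:R) ^+ k <= ((a + s) / k.+1%:R) ^+ k.+1.
Proof.
case: k => [|k] a0 s0; first by rewrite expr0 mulr1 expr1 divr1 lerDl.
pose E (i : 'I_k.+2) := if i == ord0 then a else s / k.+1%:R.
have E0 i : 0 <= E i by rewrite /E; case: ifP => // _; rewrite divr_ge0.
have := (leif_AGM (A := predT) (fun i _ => E0 i)).1.
rewrite cardT size_enum_ord !big_mkcond /= big_ord_recl [X in _ <= (X / _) ^+ _ -> _]big_ord_recl.
by rewrite /E /= prodr_const sumr_const card_ord -[s / _ *+ _]mulr_natr divfK ?pnatr_eq0.
Qed.

Lemma det_le_tr_pow (R : realFieldType) k (A : 'M[R]_k) : A^T = A -> posdefmx A ->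
  \det A <= (\tr A / k%:R) ^+ k.
Proof.
elim: k A => [|k IH] A sA pA; first by rewrite det_mx00 expr0.
have a0 : 0 < schur_pivot A := schur_pivot_gt0 pA.
have pS := schur_compl_posdef sA pA.
rewrite (det_schur sA (lt0r_neq0 a0)).
apply: le_trans (ler_wpM2l (ltW a0) (IH _ (schur_compl_sym sA) pS)) _.
apply: le_trans (mul_exp_le_AGM k (ltW a0) (posdefmx_tr_ge0 pS)) _.
have trS := tr_schur_compl_le a0.
have trS0 := posdefmx_tr_ge0 pS.
rewrite ler_pXn2r ?nnegrE ?divr_ge0 //; try lra.
by rewrite ler_pM2r ?invr_gt0 ?ltr0n //; lra.
Qed.

Lemma det_le_of_tr_invmx_le (R : rcfType) k (M N : 'M[R]_k) :
  M^T = M -> posdefmx M -> N^T = N -> posdefmx N ->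
  \tr (invmx M *m N) <= k%:R -> \det N <= \det M.
Proof.
move=> sM pM sN pN trk; have [L uL hL] := cholesky sM pM.
set Li := invmx L; set A := Li *m N *m Li^T.
have sA : A^T = A by rewrite /A !trmx_mul trmxK sN mulmxA.
have pA : posdefmx A.
  rewrite /A -[Li in Li *m N]trmxK; apply: posdefmx_congr pN.
  by rewrite unitmx_tr unitmx_inv.
have invM : invmx M = Li^T *m Li.
  have uM : M \in unitmx by rewrite hL unitmx_mul unitmx_tr uL.
  rewrite -[RHS](mulKmx uM) hL -mulmxA [L^T *m _]mulmxA -trmx_mul mulVmx //.
  by rewrite trmx1 mul1mx mulmxV // mulmx1.
have trA : \tr A = \tr (invmx M *m N).
  by rewrite /A invM mxtrace_mulC mulmxA.
have detA : \det A * \det M = \det N.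
  rewrite /A !det_mulmx det_tr /Li det_inv hL det_mulmx det_tr.
  by field; rewrite -unitfE -unitmxE.
have trAk : \tr A / k%:R <= 1.
  have [->|k0] := eqVneq (k%:R : R) 0; first by rewrite invr0 mulr0 ler01.
  by rewrite ler_pdivrMr ?lt0r ?k0 ?ler0n // mul1r trA.
have detA1 := le_trans (det_le_tr_pow sA pA)
  (exprn_ile1 _ (divr_ge0 (posdefmx_tr_ge0 pA) (ler0n _ _)) trAk).
by rewrite -detA ler_piMl // ltW // posdefmx_det_gt0.
Qed.

Lemma det_1_add_outer (R : comNzRingType) k (x y : 'cV[R]_k) :
  \det (1%:M + x *m y^T) = 1 + (y^T *m x) 0 0.
Proof.
have e : block_mx (1%:M : 'M[R]_1) 0 x 1%:M *m block_mx 1%:M (- y^T) 0 (1%:M + x *m y^T)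
       = block_mx (1%:M + y^T *m x) (- y^T) 0 1%:M *m block_mx 1%:M 0 x 1%:M.
  rewrite !mulmx_block !(mulmx0, mul0mx, mulmx1, mul1mx, addr0, add0r).
  by congr block_mx; rewrite ?mulmxN ?mulNmx; [rewrite addrK | rewrite addrC addrK].
move/(congr1 determinant): e; rewrite !det_mulmx !det_lblock !det_ublock.
by rewrite !det1 !mul1r !mulr1 det_mx11 !mxE => ->.
Qed.

Lemma det_add_outer (R : comUnitRingType) k (M : 'M[R]_k) (x y : 'cV[R]_k) :
  M \in unitmx -> \det (M + x *m y^T) = \det M * (1 + bilform (invmx M) y x).
Proof.
move=> uM; have -> : M + x *m y^T = M *m (1%:M + (invmx M *m x) *m y^T).
  by rewrite mulmxDr mulmx1 !mulmxA mulmxV // mul1mx.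
by rewrite det_mulmx det_1_add_outer mulmxA.
Qed.

Lemma pow1D_mul_le1 (R : realFieldType) (s : R) k :
  0 <= s -> (1 + s) ^+ k * (1 - k%:R * s) <= 1.
Proof.
move=> s0; elim: k => [|k IH]; first by rewrite expr0 mul0r subr0 mulr1.
have -> : (1 + s) ^+ k.+1 * (1 - k.+1%:R * s) =
    (1 + s) ^+ k * (1 - k%:R * s) - (1 + s) ^+ k * (s ^+ 2 * k.+1%:R).
  by rewrite exprS -natr1; ring.
rewrite lerBlDr (le_trans IH) // lerDl mulr_ge0 ?exprn_ge0 ?addr_ge0 //.
by rewrite mulr_ge0 ?sqr_ge0.
Qed.

Lemma exists_pow1D_lt (R : realFieldType) (g : R) k :
  k%:R < g -> exists2 s : R, 0 < s & (1 + s) ^+ k < 1 + s * g.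
Proof.
move=> kg; have K0 : 0 <= k%:R :> R := ler0n _ k.
have D0 : 0 < k%:R * g + 1 by rewrite ltr_pwDr // mulr_ge0 // ltW // (le_lt_trans K0).
set s := (g - k%:R) / (k%:R * g + 1).
have hs : s * (k%:R * g + 1) = g - k%:R by rewrite divfK ?gt_eqF.
have s0 : 0 < s by rewrite divr_gt0 // subr_gt0.
exists s => //; have Ks : 0 < 1 - k%:R * s by nra.
rewrite -(ltr_pM2r Ks); apply: le_lt_trans (pow1D_mul_le1 k (ltW s0)) _.
nra.
Qed.

Section PairSums.
Variables (V : nmodType) (m : nat).
Implicit Types (F : 'I_m -> 'I_m -> V) (x y : 'I_m).

Lemma sum_pairs_eql F x :
  \sum_(u : 'I_m) \sum_(v : 'I_m | (u < v)%N) (if x == u then F u v else 0) =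
  \sum_(v : 'I_m | (x < v)%N) F x v.
Proof.
rewrite (bigD1 x) //= [X in _ + X]big1 ?addr0 => [|u /negbTE ux].
  by apply: eq_bigr => v _; rewrite eqxx.
by apply: big1 => v _; rewrite eq_sym ux.
Qed.

Lemma sum_pairs_eqr F x :
  \sum_(u : 'I_m) \sum_(v : 'I_m | (u < v)%N) (if x == v then F u v else 0) =
  \sum_(u : 'I_m | (u < x)%N) F u x.
Proof.
rewrite (exchange_big_dep xpredT) //= (bigD1 x) //= [X in _ + X]big1 ?addr0.
  by apply: eq_bigr => u _; rewrite eqxx.
by move=> v /negbTE vx; apply: big1 => u _; rewrite eq_sym vx.
Qed.

Lemma sum_lt_eq (F : 'I_m -> V) x y :
  \sum_(v : 'I_m | (x < v)%N) (if y == v then F v else 0) = if (x < y)%N then F y else 0.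
Proof.
rewrite big_mkcond (bigD1 y) //= eqxx big1 ?addr0 // => v /negbTE vy.
by rewrite eq_sym vy if_same.
Qed.

Lemma sum_pairs_point F x y : (x < y)%N ->
  \sum_(u : 'I_m) \sum_(v : 'I_m | (u < v)%N) (if (u == x) && (v == y) then F u v else 0) =
  F x y.
Proof.
move=> xy; rewrite (bigD1 x) //= [X in _ + X]big1 ?addr0 => [|u /negbTE ux].
  rewrite (bigD1 y) //= [X in _ + X]big1 ?addr0 ?eqxx // => v /andP[_ /negbTE vy].
  by rewrite vy andbF.
by apply: big1 => v _; rewrite ux.
Qed.

End PairSums.

Lemma indicator_expand (R : comNzRingType) (a b c d : bool) (z : R) :
  z * ((a%:R - b%:R) * (c%:R - d%:R)) =
    (if a then if c then z else 0 else 0) - (if a then if d then z else 0 else 0)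
  - (if c then if b then z else 0 else 0) + (if b then if d then z else 0 else 0).
Proof. by case: a; case: b; case: c; case: d; rewrite /=; ring. Qed.

Section BradleyTerry.
Variables (R : realType) (n : nat) (pi : 'I_n.+1 -> R).
Implicit Types (w : 'I_n.+1 -> 'I_n.+1 -> R) (x y u v : 'I_n.+1).

Lemma lambdaBT_sym u v : lambdaBT pi u v = lambdaBT pi v u.
Proof. by rewrite /lambdaBT [pi u * _]mulrC [pi u + _]addrC. Qed.

Lemma infoM_pairs w x y : infoM pi w x y =
  \sum_(u : 'I_n.+1) \sum_(v : 'I_n.+1 | (u < v)%N) w u v * lambdaBT pi u v *
    (((x == u)%:R - (x == v)%:R) * ((y == u)%:R - (y == v)%:R)).
Proof.
under eq_bigr do under eq_bigr do rewrite indicator_expand.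
under eq_bigr do rewrite big_split !sumrB /=.
rewrite big_split !sumrB /= !sum_pairs_eql sum_pairs_eqr !sum_lt_eq /infoM mxE.
have [<-|nxy] := eqVneq x y.
  rewrite ltnn !subr0 (bigID (fun t : 'I_n.+1 => (x < t)%N)) /=.
  congr (_ + _); apply: eq_big => t; rewrite ?eqxx.
  - by rewrite -val_eqE /=; case: ltngtP.
  - by move=> /andP[_ xt]; rewrite /wpair xt mulrC.
  - by rewrite -val_eqE /=; case: ltngtP.
  - by move=> /andP[_ xt]; rewrite /wpair (negbTE xt) mulrC lambdaBT_sym.
rewrite /wpair !big1_eq add0r addr0.
case: ltngtP => [xy|yx|/val_inj xy]; last by rewrite xy eqxx in nxy.
- by rewrite subr0 mulrC.
- by rewrite oppr0 sub0r mulrC lambdaBT_sym.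
Qed.

(* The m-th alternative is the reference: its coordinate is the one deleted
   in [infoMm], so its indicator vector is [0]. *)
Definition evec (u : 'I_n.+1) : 'cV[R]_n :=
  if unlift ord_max u is Some i then delta_mx i 0 else 0.
Definition dvec u v := evec u - evec v.
Definition pairmx u v : 'M[R]_n := lambdaBT pi u v *: (dvec u v *m (dvec u v)^T).

Lemma evecE u i : evec u i 0 = (lift ord_max i == u)%:R.
Proof.
rewrite /evec; case: unliftP => [j ->|->]; rewrite !mxE.
  by rewrite (inj_eq lift_inj) andbT.
by rewrite eq_sym (negbTE (neq_lift _ _)).
Qed.

Lemma infoMm_pairs w : infoMm pi w =
  \sum_(u : 'I_n.+1) \sum_(v : 'I_n.+1 | (u < v)%N) w u v *: pairmx u v.
Proof.
apply/matrixP => i j; rewrite /infoMm mxE mxE infoM_pairs summxE; apply: eq_bigr => u _.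
rewrite summxE; apply: eq_bigr => v _.
by rewrite !mxE big_ord1 !mxE !evecE mulrA.
Qed.

Lemma pairmx_sym u v : (pairmx u v)^T = pairmx u v.
Proof. by rewrite /pairmx linearZ /= trmx_mul trmxK. Qed.

Lemma infoMm_sym w : (infoMm pi w)^T = infoMm pi w.
Proof.
rewrite infoMm_pairs linear_sum; apply: eq_bigr => u _.
by rewrite linear_sum; apply: eq_bigr => v _; rewrite linearZ /= pairmx_sym.
Qed.

Lemma infoMm_lin a b w w' :
  infoMm pi (fun u v => a * w u v + b * w' u v) = a *: infoMm pi w + b *: infoMm pi w'.
Proof.
rewrite !infoMm_pairs !scaler_sumr -big_split; apply: eq_bigr => u _ /=.
rewrite !scaler_sumr -big_split; apply: eq_bigr => v _ /=.
by rewrite scalerDl !scalerA.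
Qed.

Definition point_design (x y u v : 'I_n.+1) : R := ((u == x) && (v == y))%:R.

Lemma infoMm_point x y : (x < y)%N -> infoMm pi (point_design x y) = pairmx x y.
Proof.
move=> xy; rewrite infoMm_pairs -[RHS](sum_pairs_point (fun u v => pairmx u v) xy).
apply: eq_bigr => u _; apply: eq_bigr => v _.
by rewrite /point_design; case: ifP; rewrite ?scale1r ?scale0r.
Qed.

Lemma sum_point_design x y : (x < y)%N ->
  \sum_(u : 'I_n.+1) \sum_(v : 'I_n.+1 | (u < v)%N) point_design x y u v = 1.
Proof.
move=> xy; rewrite -[RHS](sum_pairs_point (fun _ _ => 1 : R) xy).
by apply: eq_bigr => u _; apply: eq_bigr => v _; rewrite /point_design; case: ifP.
Qed.

Lemma GammaBT_bilform w u v :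
  GammaBT pi w u v = bilform (invmx (infoMm pi w)) (dvec u v) (dvec u v).
Proof.
have sS : (invmx (infoMm pi w))^T = invmx (infoMm pi w) by rewrite trmx_inv infoMm_sym.
rewrite /dvec bilformBl !bilformBr /GammaBT /evec.
case: (unlift ord_max u) => [i|]; case: (unlift ord_max v) => [j|];
  rewrite ?bilform_delta ?bilform0l ?bilform0r ?subr0 ?sub0r ?opprK //.
have -> : invmx (infoMm pi w) j i = invmx (infoMm pi w) i j by rewrite -[in LHS]sS mxE.
by ring.
Qed.

Lemma tr_invmx_infoMm w w' : \tr (invmx (infoMm pi w) *m infoMm pi w') =
  \sum_(u : 'I_n.+1) \sum_(v : 'I_n.+1 | (u < v)%N)
    w' u v * (lambdaBT pi u v * GammaBT pi w u v).
Proof.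
rewrite [infoMm pi w']infoMm_pairs mulmx_sumr raddf_sum; apply: eq_bigr => u _.
rewrite mulmx_sumr raddf_sum; apply: eq_bigr => v _ /=.
rewrite /pairmx -!scalemxAr !mxtraceZ mulmxA mxtrace_mulC trace_mx11.
by rewrite GammaBT_bilform /bilform mulmxA.
Qed.

Definition star_design (u v : 'I_n.+1) : R := if v == ord_max then n%:R^-1 else 0.

Lemma is_design_star : (0 < n)%N -> is_design star_design.
Proof.
move=> n0; split=> [u v _|]; first by rewrite /star_design; case: ifP; rewrite ?invr_ge0.
rewrite (eq_bigr (fun u : 'I_n.+1 => if (u < n)%N then n%:R^-1 else 0)) => [|u _].
  rewrite big_ord_recr /= ltnn addr0 (eq_bigr (fun _ => n%:R^-1)) => [|i _].
    by rewrite sumr_const card_ord -[n%:R^-1 *+ n]mulr_natr mulVf // pnatr_eq0 -lt0n.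
  by rewrite ltn_ord.
under eq_bigr do rewrite /star_design eq_sym.
exact: (sum_lt_eq (fun _ => n%:R^-1)).
Qed.

Lemma infoMm_star :
  infoMm pi star_design = diag_mx (\row_i (lambdaBT pi (lift ord_max i) ord_max / n%:R)).
Proof.
have lift_neq (i : 'I_n) : (lift ord_max i == ord_max) = false.
  by apply/negbTE; rewrite eq_sym neq_lift.
have wpair_star (i : 'I_n) t :
    wpair star_design (lift ord_max i) t = if t == ord_max then n%:R^-1 else 0.
  rewrite /wpair /star_design lift_neq; case: ltnP => // le_t_i.
  by case: eqP => // tmax; move: le_t_i; rewrite tmax lift_max /= leqNgt ltn_ord.
apply/matrixP => i j; rewrite /infoMm !mxE (inj_eq lift_inj).
have [_|ij] := eqVneq i j; last by rewrite wpair_star lift_neq mulr0 oppr0 mulr0n.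
rewrite mulr1n (bigD1 ord_max) /=; last by rewrite eq_sym lift_neq.
rewrite wpair_star eqxx big1 ?addr0 // => t /andP[_ /negbTE tmax].
by rewrite wpair_star tmax mulr0.
Qed.

Hypothesis pi_gt0 : forall u, 0 < pi u.

Lemma lambdaBT_gt0 u v : 0 < lambdaBT pi u v.
Proof. by rewrite divr_gt0 ?mulr_gt0 ?exprn_gt0 ?addr_gt0. Qed.

Lemma infoMm_psd w : (forall u v : 'I_n.+1, (u < v)%N -> 0 <= w u v) ->
  psdmx (infoMm pi w).
Proof.
move=> w0 x; rewrite infoMm_pairs bilform_sum sumr_ge0 // => u _.
rewrite bilform_sum sumr_ge0 // => v uv; rewrite !bilformZ bilform_outer.
by rewrite mulr_ge0 ?w0 // mulr_ge0 ?sqr_ge0 // (ltW (lambdaBT_gt0 u v)).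
Qed.

Lemma det_infoMm_star_gt0 : (0 < n)%N -> 0 < \det (infoMm pi star_design).
Proof.
move=> n0; rewrite infoMm_star det_diag; apply: prodr_gt0 => i _.
by rewrite mxE divr_gt0 ?lambdaBT_gt0 ?ltr0n.
Qed.

Definition mix_design w s (x y u v : 'I_n.+1) : R :=
  (1 + s)^-1 * w u v + (s / (1 + s)) * point_design x y u v.

Lemma is_design_mix w s x y : (x < y)%N -> 0 <= s ->
  is_design w -> is_design (mix_design w s x y).
Proof.
move=> xy s0 [w0 w1]; have s1 : 0 < 1 + s by rewrite ltr_pwDl.
split=> [u v uv|].
  have s1V : 0 <= (1 + s)^-1 by rewrite invr_ge0 ltW.
  by rewrite addr_ge0 ?mulr_ge0 ?w0 ?divr_ge0 ?(ltW s1) // /point_design; case: ifP.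
under eq_bigr do rewrite big_split /= -!mulr_sumr.
rewrite big_split /= -!mulr_sumr w1 sum_point_design // !mulr1.
by rewrite -[X in X + _]mul1r -mulrDl mulfV ?gt_eqF.
Qed.

Lemma det_infoMm_mix w s x y : (x < y)%N -> 0 <= s ->
  infoMm pi w \in unitmx ->
  \det (infoMm pi (mix_design w s x y)) * (1 + s) ^+ n =
  \det (infoMm pi w) * (1 + s * (lambdaBT pi x y * GammaBT pi w x y)).
Proof.
move=> xy s0 uM; have s1 : 1 + s != 0 by rewrite gt_eqF ?ltr_pwDl.
set M := infoMm pi w; set a := dvec x y; set l := lambdaBT pi x y.
have -> : infoMm pi (mix_design w s x y) = (1 + s)^-1 *: (M + ((s * l) *: a) *m a^T).
  rewrite infoMm_lin infoMm_point // /pairmx -/a -/l -scalemxAl scalerDr !scalerA.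
  by congr (_ + _ *: _); rewrite mulrAC mulrC.
rewrite detZ det_add_outer // bilformZr GammaBT_bilform -/M -/a.
by rewrite exprVn mulrAC mulVf ?expf_neq0 // mul1r -mulrA.
Qed.

Lemma sum_lambda_Gamma w : infoMm pi w \in unitmx ->
  \sum_(u : 'I_n.+1) \sum_(v : 'I_n.+1 | (u < v)%N)
    w u v * (lambdaBT pi u v * GammaBT pi w u v) = n%:R.
Proof. by move=> uM; rewrite -tr_invmx_infoMm mulVmx // mxtrace1. Qed.

Lemma optimal_det_gt0 w : (0 < n)%N -> locally_D_optimal pi w ->
  0 < \det (infoMm pi w).
Proof.
move=> n0 [_ opt]; have := opt _ (is_design_star n0).
by rewrite /logdetM det_infoMm_star_gt0 //; case: ifP => // _; rewrite leeNy_eq.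
Qed.

Lemma optimal_lambda_Gamma_le w u v : (0 < n)%N -> locally_D_optimal pi w ->
  (u < v)%N -> lambdaBT pi u v * GammaBT pi w u v <= n%:R.
Proof.
move=> n0 opt uv; rewrite leNgt; apply/negP => /exists_pow1D_lt[s s0 gain].
have dM := optimal_det_gt0 n0 opt.
have uM : infoMm pi w \in unitmx by rewrite unitmxE unitfE gt_eqF.
have lt_det : \det (infoMm pi w) < \det (infoMm pi (mix_design w s u v)).
  rewrite -(ltr_pM2r (exprn_gt0 n (ltr_pwDl ltr01 (ltW s0)))) det_infoMm_mix ?ltW //.
  by rewrite ltr_pM2l.
have := opt.2 _ (is_design_mix uv (ltW s0) opt.1).
have dMs := lt_trans dM lt_det.
by rewrite /logdetM dM dMs lee_fin ler_ln ?posrE // leNgt lt_det.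
Qed.

Lemma optimal_slack w u v : (0 < n)%N -> locally_D_optimal pi w -> (u < v)%N ->
  w u v * (n%:R - lambdaBT pi u v * GammaBT pi w u v) = 0.
Proof.
move=> n0 opt uv; have [[w0 w1] _] := opt.
have uM : infoMm pi w \in unitmx by rewrite unitmxE unitfE gt_eqF ?optimal_det_gt0.
have slack_ge0 u' v' : (u' < v')%N ->
    0 <= w u' v' * (n%:R - lambdaBT pi u' v' * GammaBT pi w u' v').
  by move=> uv'; rewrite mulr_ge0 ?w0 // subr_ge0 optimal_lambda_Gamma_le.
have : \sum_(u : 'I_n.+1) \sum_(v : 'I_n.+1 | (u < v)%N)
    w u v * (n%:R - lambdaBT pi u v * GammaBT pi w u v) = 0.
  transitivity (n%:R * (\sum_(u : 'I_n.+1) \sum_(v : 'I_n.+1 | (u < v)%N) w u v) -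
    \sum_(u : 'I_n.+1) \sum_(v : 'I_n.+1 | (u < v)%N)
      w u v * (lambdaBT pi u v * GammaBT pi w u v)).
    rewrite mulr_sumr -sumrB; apply: eq_bigr => u' _.
    by rewrite mulr_sumr -sumrB; apply: eq_bigr => v' _; rewrite mulrBr mulrC.
  by rewrite w1 mulr1 sum_lambda_Gamma // subrr.
move/psumr_eq0P => /(_ (fun u' _ => sumr_ge0 _ (slack_ge0 u')) u isT).
by move/psumr_eq0P => /(_ (slack_ge0 u)); apply.
Qed.

Lemma lambda_Gamma_le_optimal w : is_design w -> infoMm pi w \in unitmx ->
  (forall u v, (u < v)%N -> lambdaBT pi u v * GammaBT pi w u v <= n%:R) ->
  locally_D_optimal pi w.
Proof.
move=> dw uM hG; split => // w' [w'0 w'1].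
have pM := psdmx_unit_posdef (infoMm_sym w) (infoMm_psd dw.1) uM.
have dM := posdefmx_det_gt0 (infoMm_sym w) pM.
rewrite /logdetM dM; case: ifPn => [dM'|_]; last by rewrite leNye.
have uM' : infoMm pi w' \in unitmx by rewrite unitmxE unitfE gt_eqF.
have pM' := psdmx_unit_posdef (infoMm_sym w') (infoMm_psd w'0) uM'.
rewrite lee_fin ler_ln ?posrE //.
apply: (det_le_of_tr_invmx_le (infoMm_sym w) pM (infoMm_sym w') pM').
rewrite tr_invmx_infoMm.
apply: (@le_trans _ _ (\sum_(u : 'I_n.+1) \sum_(v : 'I_n.+1 | (u < v)%N) w' u v * n%:R)).
  apply: ler_sum => u _; apply: ler_sum => v uv.
  by apply: ler_wpM2l; [exact: w'0 | exact: hG].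
by under eq_bigr do rewrite -mulr_suml; rewrite -mulr_suml w'1 mul1r.
Qed.

Lemma GammaBT_le_GammaBar w u v :
  (GammaBT pi w u v <= GammaBar pi u v) = (lambdaBT pi u v * GammaBT pi w u v <= n%:R).
Proof. by rewrite /GammaBar ler_pdivlMr ?lambdaBT_gt0 // mulrC. Qed.

Lemma GammaBT_sub_GammaBar w u v : (GammaBT pi w u v - GammaBar pi u v) * w u v =
  - (w u v * (n%:R - lambdaBT pi u v * GammaBT pi w u v)) / lambdaBT pi u v.
Proof. by rewrite /GammaBar; field; rewrite gt_eqF ?lambdaBT_gt0. Qed.

End BradleyTerry.

Unset Implicit Arguments.
Set Strict Implicit.

Theorem corollary4p2 (R : realType) (n : nat) (hn : (1 <= n)%N)
  (pi : 'I_n.+1 -> R) (hpi : forall u, 0 < pi u)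
  (w : 'I_n.+1 -> 'I_n.+1 -> R)
  (hsum : \sum_(u : 'I_n.+1) \sum_(v : 'I_n.+1 | (u < v)%N) w u v = 1) :
  locally_D_optimal pi w <->
  [/\ (forall u v : 'I_n.+1, (u < v)%N -> 0 <= w u v),
      infoMm pi w \in unitmx,
      (forall u v : 'I_n.+1, (u < v)%N -> GammaBT pi w u v <= GammaBar pi u v) &
      (forall u v : 'I_n.+1, (u < v)%N ->
          (GammaBT pi w u v - GammaBar pi u v) * w u v = 0)].
Proof.
split=> [opt | [w0 uM hG _]].
  have uM : infoMm pi w \in unitmx.
    by rewrite unitmxE unitfE gt_eqF ?(optimal_det_gt0 hpi hn opt).
  split=> // [|u v uv|u v uv]; first by case: opt => [[]].
    by rewrite (GammaBT_le_GammaBar hpi) (optimal_lambda_Gamma_le hpi hn opt uv).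
  by rewrite (GammaBT_sub_GammaBar hpi) (optimal_slack hpi hn opt uv) oppr0 mul0r.
apply: lambda_Gamma_le_optimal => // u v uv.
by rewrite -(GammaBT_le_GammaBar hpi) hG.
Qed.
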